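(* Let $C\ge 3$ be an integer and $r>0$. Define on $\mathbb{R}^C$ the functions $f(\mathbf{h})=H(\mathrm{softmax}(\mathbf{h}))$, $g_1(\mathbf{h})=\sum_{i=1}^C h_i$, and $g_2(\mathbf{h})=-\frac{r^2}{2}+\sum_{i=1}^C\frac{h_i^2}{2}$. Suppose $\mathbf{h}\in\mathbb{R}^C$ and $\lambda_1,\lambda_2\in\mathbb{R}$ satisfy $$\nabla f(\mathbf{h})+\lambda_1\nabla g_1(\mathbf{h})+\lambda_2\nabla g_2(\mathbf{h})=0.$$ If $\alpha,\beta,\gamma\in\{1,\dots,C\}$ satisfy $h_\alpha\ge h_\beta\ge h_\gamma$, then $h_\alpha=h_\beta$ or $h_\beta=h_\gamma$. (Consequently the coordinates of $\mathbf{h}$ take at most two distinct values.)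
   Context: For $\mathbf{h}=(h_1,\dots,h_C)\in\mathbb{R}^C$, $\mathrm{softmax}(\mathbf{h})\in\mathbb{R}^C$ is the probability vector with entries $y_i=e^{h_i}/\sum_{j=1}^C e^{h_j}$. For a probability vector $\mathbf{y}$, $H(\mathbf{y})=-\sum_{i=1}^C y_i\log y_i$ is its Shannon entropy (natural logarithm). Gradients are with respect to $\mathbf{h}$. *)

From mathcomp Require Import all_boot all_order all_algebra.
From mathcomp Require Import all_classical all_reals all_analysis.
Set Implicit Arguments. Unset Strict Implicit. Unset Printing Implicit Defensive.
Import Order.TTheory GRing.Theory Num.Theory.
Local Open Scope ring_scope.

Definition softmax (R : realType) (C : nat) (h : 'I_C -> R) : 'I_C -> R :=
  fun i => expR (h i) / \sum_(j < C) expR (h j).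

Definition entropy (R : realType) (C : nat) (y : 'I_C -> R) : R :=
  - \sum_(i < C) y i * ln (y i).

Definition f_ent (R : realType) (C : nat) (h : 'I_C -> R) : R :=
  entropy (softmax h).

Definition g1 (R : realType) (C : nat) (h : 'I_C -> R) : R :=
  \sum_(i < C) h i.

Definition g2 (R : realType) (C : nat) (r : R) (h : 'I_C -> R) : R :=
  - (r ^+ 2) / 2 + \sum_(i < C) h i ^+ 2 / 2.

(* i-th partial derivative of F at h: derivative at t = 0 of t |-> F (h + t e_i);
   the gradient of F at h is the vector (partial F h i)_i. *)
Definition partial (R : realType) (C : nat) (F : ('I_C -> R) -> R)
    (h : 'I_C -> R) (i : 'I_C) : R :=
  derive1 (fun t : R => F (fun j => h j + (if j == i then t else 0))) 0.

(* Write y = softmax h and M = sum_j y_j h_j.  Since d/dh_i H(softmax h) = y_i (M - h_i),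
   the Lagrange condition says (h_i - M)(y_i - lambda2) = lambda1 + lambda2 M =: k for every i,
   and both factors are strictly increasing in h_i.  Three strictly increasing pairs with a
   common product force k < 0.  On the other hand sum_i y_i (h_i - M) = 0, so h_i - M takes
   both signs; with k < 0 the second factor is then negative where the first is positive and
   positive where the first is negative, against monotonicity. *)

From mathcomp Require Import all_boot all_order all_algebra.
From mathcomp Require Import all_classical all_reals all_analysis.
From mathcomp Require Import ring lra.
Set Implicit Arguments. Unset Strict Implicit. Unset Printing Implicit Defensive.
Import Order.TTheory GRing.Theory Num.Theory.
Local Open Scope ring_scope.

Section Derivatives.
Variable R : realType.

Lemma is_derive_translate (c x d : R) (F : R -> R) :
  is_derive x 1 F d -> is_derive (0:R) 1 (fun t => c + F (x + t)) d.
Proof.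
move=> dF; have dFx : is_derive (0:R) 1 (F \o shift x) (d * 1).
  apply: is_derive1_comp; last exact: is_derive_shift.
  by rewrite /shift /= add0r.
have -> : (fun t => c + F (x + t)) = cst c + (F \o shift x).
  by apply/funext => t; rewrite !fctE /= (addrC t).
by apply: is_derive_eq; rewrite add0r mulr1.
Qed.

Lemma is_derive_ln_sub_div (Z N : R -> R) (x dZ dN : R) : 0 < Z x ->
  is_derive x 1 Z dZ -> is_derive x 1 N dN ->
  is_derive x 1 (fun t => ln (Z t) - N t / Z t)
    (dZ / Z x - (dN * Z x - N x * dZ) / Z x ^+ 2).
Proof.
move=> Zx_gt0 dZx dNx; have Zx_neq0 : Z x != 0 by rewrite gt_eqF.
have dlnZ : is_derive x 1 (@ln R \o Z) ((Z x)^-1 * dZ).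
  exact: is_derive1_comp (is_derive1_ln Zx_gt0) dZx.
have dZV := is_deriveV Zx_neq0 dZx.
have -> : (fun t => ln (Z t) - N t / Z t) = @ln R \o Z - N * (fun t => (Z t)^-1).
  by apply: funext.
by apply: is_derive_eq; rewrite /GRing.scale /=; field.
Qed.

Lemma partialE (C : nat) (F : ('I_C -> R) -> R) h i d :
  is_derive (0:R) 1 (fun t => F (fun j => h j + (if j == i then t else 0))) d ->
  partial F h i = d.
Proof. by move=> dF; rewrite /partial derive1E derive_val. Qed.

Lemma sum_perturb (C : nat) (F : R -> R) (h : 'I_C -> R) i t :
  \sum_(j < C) F (h j + (if j == i then t else 0)) =
  \sum_(j < C | j != i) F (h j) + F (h i + t).
Proof.
rewrite (bigD1 i) //= eqxx addrC; congr (_ + _).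
by apply: eq_bigr => j /negbTE ->; rewrite addr0.
Qed.

Lemma partial_g1 (C : nat) (h : 'I_C -> R) i : partial (@g1 R C) h i = 1.
Proof.
apply: partialE; rewrite /g1.
under [fun t => _]funext => t do rewrite (sum_perturb id).
exact: is_derive_translate.
Qed.

Lemma partial_g2 (C : nat) r (h : 'I_C -> R) i : partial (g2 r) h i = h i.
Proof.
apply: partialE; rewrite /g2.
under [fun t => _]funext => t do rewrite (sum_perturb (fun y => y ^+ 2 / 2)) addrA.
have dsq : is_derive (h i) 1 (fun y : R => y ^+ 2 / 2) (h i).
  have -> : (fun y : R => y ^+ 2 / 2) = 2^-1 *: (@id R) ^+ 2.
    by apply/funext => y; rewrite !fctE mulrC.
  by apply: is_derive_eq; rewrite /= expr1 /GRing.scale /= mulr1 mulrA mulVf ?mul1r.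
exact: is_derive_translate dsq.
Qed.

End Derivatives.

Section Softmax.
Variables (R : realType) (C : nat) (h : 'I_C -> R).

Lemma sum_expR_gt0 (i0 : 'I_C) : 0 < \sum_(j < C) expR (h j).
Proof.
rewrite (bigD1 i0) //= ltr_wpDr ?expR_gt0 //.
by apply: sumr_ge0 => j _; rewrite expR_ge0.
Qed.

Lemma softmax_gt0 i : 0 < softmax h i.
Proof. by rewrite divr_gt0 ?expR_gt0 ?(sum_expR_gt0 i). Qed.

Lemma softmax_lt i j : h i < h j -> softmax h i < softmax h j.
Proof. by move=> hij; rewrite ltr_pM2r ?invr_gt0 ?(sum_expR_gt0 i) ?ltr_expR. Qed.

Lemma sum_softmax (i0 : 'I_C) : \sum_(j < C) softmax h j = 1.
Proof. by rewrite -mulr_suml divff // gt_eqF ?(sum_expR_gt0 i0). Qed.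

Lemma sum_softmax_mul (F : 'I_C -> R) :
  \sum_(j < C) softmax h j * F j =
  (\sum_(j < C) expR (h j) * F j) / \sum_(j < C) expR (h j).
Proof. by rewrite mulr_suml; apply: eq_bigr => j _; rewrite mulrAC. Qed.

Lemma f_entE (i0 : 'I_C) :
  f_ent h = ln (\sum_(j < C) expR (h j)) - \sum_(j < C) softmax h j * h j.
Proof.
have Z_gt0 := sum_expR_gt0 i0.
rewrite /f_ent /entropy -[ln _]mul1r -(sum_softmax i0) mulr_suml -sumrB -sumrN.
apply: eq_bigr => j _; rewrite /softmax ln_div ?posrE ?expR_gt0 // expRK.
by rewrite mulrBr opprB.
Qed.

End Softmax.

Lemma partial_f_ent (R : realType) (C : nat) (h : 'I_C -> R) i :
  partial (@f_ent R C) h i = softmax h i * (\sum_(j < C) softmax h j * h j - h i).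
Proof.
set A := \sum_(j < C | j != i) expR (h j).
set B := \sum_(j < C | j != i) expR (h j) * h j.
apply: partialE.
under [fun t => _]funext => t do
  rewrite (f_entE _ i) sum_softmax_mul (sum_perturb expR) (sum_perturb (fun y => expR y * y)).
have A_ge0 : 0 <= A by apply: sumr_ge0 => j _; rewrite expR_ge0.
have dxexp : is_derive (h i) 1 (fun y : R => expR y * y) (expR (h i) * h i + expR (h i)).
  apply: is_derive_eq (is_deriveM (is_derive_expR (h i)) (is_derive_id (h i) 1)) _.
  by rewrite /GRing.scale /= mulr1 addrC mulrC.
apply: is_derive_eq.
  apply: is_derive_ln_sub_div (is_derive_translate A (is_derive_expR (h i)))
                              (is_derive_translate B dxexp).
  by rewrite addr0 ltr_wpDl ?expR_gt0.
rewrite /= !addr0 sum_softmax_mul /softmax.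
have -> : \sum_(j < C) expR (h j) = A + expR (h i) by rewrite (bigD1 i) // addrC.
have -> : \sum_(j < C) expR (h j) * h j = B + expR (h i) * h i.
  by rewrite (bigD1 i) // addrC.
have Z_neq0 : A + expR (h i) != 0 by rewrite gt_eqF ?ltr_wpDl ?expR_gt0.
by field.
Qed.

Section ConstantProduct.
Variable R : realFieldType.

Lemma eq_mul_incr3_lt0 (ta tb tc wa wb wc : R) :
  tc < tb -> tb < ta -> wc < wb -> wb < wa ->
  tc * wc = tb * wb -> ta * wa = tb * wb -> tb * wb < 0.
Proof.
move=> tcb tba wcb wba ecb eab; rewrite ltNge; apply/negP => k_ge0.
have [tb_lt0|tb_gt0|tb0] := ltgtP tb 0.
- have : wb <= 0 by rewrite -(nmulr_rge0 _ tb_lt0).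
  nra.
- have : 0 <= wb by rewrite -(pmulr_rge0 _ tb_gt0).
  nra.
- move: ecb eab tcb tba; rewrite tb0 mul0r => /eqP + /eqP + tc_lt0 ta_gt0.
  rewrite !mulf_eq0 (lt_eqF tc_lt0) (gt_eqF ta_gt0) /= => /eqP wc0 /eqP wa0.
  by move: (lt_trans wcb wba); rewrite wc0 wa0 ltxx.
Qed.

Lemma weighted_sum_eq0_gt0 (I : finType) (y t : I -> R) (i : I) :
  (forall j, 0 < y j) -> \sum_j y j * t j = 0 -> t i != 0 -> exists j, 0 < t j.
Proof.
move=> y_gt0 sum0 ti_neq0; apply/existsP; apply: contraT => /existsPn t_le0.
have yt_le0 j : 0 <= - (y j * t j) by rewrite oppr_ge0 pmulr_rle0 // leNgt t_le0.
have sumN0 : \sum_j - (y j * t j) = 0 by rewrite sumrN sum0 oppr0.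
have /eqP := psumr_eq0P (fun j _ => yt_le0 j) sumN0 (i := i) isT.
by rewrite oppr_eq0 mulf_eq0 gt_eqF //= (negPf ti_neq0).
Qed.

Lemma comonotone_const_product_ge0 (I : finType) (i0 : I) (y t w : I -> R) k :
  (forall j, 0 < y j) -> \sum_j y j * t j = 0 ->
  (forall j l, t j < t l -> w j < w l) -> (forall j, t j * w j = k) -> 0 <= k.
Proof.
move=> y_gt0 sum0 tw_incr twk; rewrite leNgt; apply/negP => k_lt0.
have t_neq0 : t i0 != 0.
  by apply: contraTneq k_lt0 => t0; rewrite -(twk i0) t0 mul0r ltxx.
have [j tj_gt0] := weighted_sum_eq0_gt0 y_gt0 sum0 t_neq0.
have sumN0 : \sum_j y j * - t j = 0.
  by rewrite (eq_bigr _ (fun j _ => mulrN _ _)) sumrN sum0 oppr0.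
have tN_neq0 : - t i0 != 0 by rewrite oppr_eq0.
have [l tl_lt0] := weighted_sum_eq0_gt0 y_gt0 sumN0 tN_neq0.
rewrite oppr_gt0 in tl_lt0.
have wlj := tw_incr l j (lt_trans tl_lt0 tj_gt0).
have wj_lt0 : w j < 0 by rewrite -(pmulr_rlt0 _ tj_gt0) twk.
have wl_gt0 : 0 < w l by rewrite -(nmulr_rlt0 _ tl_lt0) twk.
by move: (lt_trans wl_gt0 (lt_trans wlj wj_lt0)); rewrite ltxx.
Qed.
End ConstantProduct.

Theorem mainTheorem3 (R : realType) (C : nat) (r : R) (h : 'I_C -> R)
    (lambda1 lambda2 : R) :
  (3 <= C)%N -> 0 < r ->
  (forall i : 'I_C,
     partial (@f_ent R C) h i + lambda1 * partial (@g1 R C) h i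
       + lambda2 * partial (g2 r) h i = 0) ->
  forall a b c : 'I_C, h b <= h a -> h c <= h b -> h a = h b \/ h b = h c.
Proof.
move=> _ _ stationary a b c hba hcb.
have [|hab] := eqVneq (h a) (h b); first by left.
have [|hbc] := eqVneq (h b) (h c); first by right.
pose M := \sum_(j < C) softmax h j * h j.
pose t j := h j - M.
pose w j := softmax h j - lambda2.
have twk j : t j * w j = lambda1 + lambda2 * M.
  by have := stationary j; rewrite partial_f_ent partial_g1 partial_g2 -/M /t /w; lra.
have sum0 : \sum_(j < C) softmax h j * t j = 0.
  rewrite (eq_bigr _ (fun j _ => mulrBr _ _ _)) sumrB -mulr_suml.
  by rewrite (sum_softmax _ a) mul1r subrr.
have tw_incr j l : t j < t l -> w j < w l.
  by rewrite ltrD2r => /softmax_lt; rewrite ltrD2r.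
have k_ge0 := comonotone_const_product_ge0 a (softmax_gt0 h) sum0 tw_incr twk.
have t_cb : t c < t b by rewrite ltrD2r lt_neqAle eq_sym hbc hcb.
have t_ba : t b < t a by rewrite ltrD2r lt_neqAle eq_sym hab hba.
have := eq_mul_incr3_lt0 t_cb t_ba (tw_incr _ _ t_cb) (tw_incr _ _ t_ba).
by rewrite !twk => /(_ erefl erefl); rewrite ltNge k_ge0.
Qed.
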